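(* For every integer $n\ge0$ and each of the two choices $\mathrm{o}/\mathrm{e}$, $\mathbf{G}^{[n]}_{\mathrm{o}/\mathrm{e}}(\lambda;0,0)=\mathbf{G}^{[0]}_{\mathrm{o}/\mathrm{e}}(\lambda;0,0)$ for all $\lambda\in\mathbb{C}\setminus\{\pm\mathrm{i}\}$.
   Context: $\sigma_2=\begin{bmatrix}0&-\mathrm{i}\\\mathrm{i}&0\end{bmatrix}$. Let $\mathbf{c}_{\infty,\mathrm{o}}=(1,-1)^\top$ and $\mathbf{c}_{\infty,\mathrm{e}}=(1,1)^\top$. Define recursively potentials $\psi^{[n]}$ (for a fixed choice o or e): $\psi^{[0]}\equiv1$. Given $\psi^{[n]}$, a global classical solution of $\mathrm{i}\psi_t+\frac12\psi_{xx}+(|\psi|^2-1)\psi=0$, let $\mathbf{U}^{[n]}(\lambda;x,t)$ be the unique simultaneous fundamental solution of its Lax pair $\mathbf{U}_x=\begin{bmatrix}-\mathrm{i}\lambda&\psi^{[n]}\\-\psi^{[n]*}&\mathrm{i}\lambda\end{bmatrix}\mathbf{U}$, $\mathbf{U}_t=\begin{bmatrix}-\mathrm{i}\lambda^2+\frac{\mathrm{i}}2(|\psi^{[n]}|^2-1)&\lambda\psi^{[n]}+\frac{\mathrm{i}}2\psi^{[n]}_x\\-\lambda\psi^{[n]*}+\frac{\mathrm{i}}2\psi^{[n]*}_x&\mathrm{i}\lambda^2-\frac{\mathrm{i}}2(|\psi^{[n]}|^2-1)\end{bmatrix}\mathbf{U}$ with $\mathbf{U}^{[n]}(\lambda;0,0)=\mathbb{I}$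 (entire in $\lambda$). Let $\mathbf{s}=\mathbf{U}^{[n]}(\mathrm{i};x,t)\mathbf{c}_\infty$, $\mathbf{s}'=\partial_\lambda\mathbf{U}^{[n]}(\mathrm{i};x,t)\mathbf{c}_\infty$, $N=\mathbf{s}^\dagger\mathbf{s}$, $w=\mathbf{s}^\top\sigma_2\mathbf{s}'$, $\mathbf{Y}^{[n]}_\infty=\big[-4w^*\mathbf{s}\mathbf{s}^\top\sigma_2+2\mathrm{i}N\sigma_2\mathbf{s}^*\mathbf{s}^\top\sigma_2\big]/(4|w|^2+N^2)$, $\mathbf{Z}^{[n]}_\infty=\sigma_2(\mathbf{Y}^{[n]}_\infty)^*\sigma_2$, and $\mathbf{G}^{[n]}(\lambda;x,t)=\mathbb{I}+\mathbf{Y}^{[n]}_\infty(x,t)/(\lambda-\mathrm{i})+\mathbf{Z}^{[n]}_\infty(x,t)/(\lambda+\mathrm{i})$. Set $\psi^{[n+1]}=\psi^{[n]}+2\mathrm{i}\big(Y^{[n]}_{\infty,12}-(Y^{[n]}_{\infty,21})^*\big)$ (a global classical solution by the Darboux theorem). The subscript o/e indicates the choice $\mathbf{c}_\infty=\mathbf{c}_{\infty,\mathrm{o}}$ or $\mathbf{c}_{\infty,\mathrm{e}}$. (Then $\psi^{[n]}_\mathrm{o}$ and $\psi^{[n]}_\mathrm{e}$ are the rogue waves of order $2n-1$ and $2n$.) *)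

From Stdlib Require Import Reals.
Open Scope R_scope.

Definition Cplx : Type := (R * R)%type.
Definition RtoC (r : R) : Cplx := (r, 0).
Definition C0 : Cplx := (0, 0).
Definition C1 : Cplx := (1, 0).
Definition ci : Cplx := (0, 1).
Definition Cadd (z w : Cplx) : Cplx := (fst z + fst w, snd z + snd w).
Definition Copp (z : Cplx) : Cplx := (- fst z, - snd z).
Definition Csub (z w : Cplx) : Cplx := Cadd z (Copp w).
Definition Cmul (z w : Cplx) : Cplx :=
  (fst z * fst w - snd z * snd w, fst z * snd w + snd z * fst w).
Definition Cconj (z : Cplx) : Cplx := (fst z, - snd z).
Definition Cabs2 (z : Cplx) : R := fst z * fst z + snd z * snd z.
Definition Cnorm (z : Cplx) : R := sqrt (Cabs2 z).
Definition Cinv (z : Cplx) : Cplx := (fst z / Cabs2 z, - snd z / Cabs2 z).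
Definition Cdiv (z w : Cplx) : Cplx := Cmul z (Cinv w).

Record V2 : Type := mkV2 { v1 : Cplx; v2 : Cplx }.
Record M2 : Type := mkM2 { m11 : Cplx; m12 : Cplx; m21 : Cplx; m22 : Cplx }.

Definition I2 : M2 := mkM2 C1 C0 C0 C1.
Definition Madd (A B : M2) : M2 :=
  mkM2 (Cadd (m11 A) (m11 B)) (Cadd (m12 A) (m12 B))
       (Cadd (m21 A) (m21 B)) (Cadd (m22 A) (m22 B)).
Definition Mscale (a : Cplx) (A : M2) : M2 :=
  mkM2 (Cmul a (m11 A)) (Cmul a (m12 A)) (Cmul a (m21 A)) (Cmul a (m22 A)).
Definition Mmul (A B : M2) : M2 :=
  mkM2 (Cadd (Cmul (m11 A) (m11 B)) (Cmul (m12 A) (m21 B)))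
       (Cadd (Cmul (m11 A) (m12 B)) (Cmul (m12 A) (m22 B)))
       (Cadd (Cmul (m21 A) (m11 B)) (Cmul (m22 A) (m21 B)))
       (Cadd (Cmul (m21 A) (m12 B)) (Cmul (m22 A) (m22 B))).
Definition Mconj (A : M2) : M2 :=
  mkM2 (Cconj (m11 A)) (Cconj (m12 A)) (Cconj (m21 A)) (Cconj (m22 A)).
Definition Mvec (A : M2) (s : V2) : V2 :=
  mkV2 (Cadd (Cmul (m11 A) (v1 s)) (Cmul (m12 A) (v2 s)))
       (Cadd (Cmul (m21 A) (v1 s)) (Cmul (m22 A) (v2 s))).
Definition Vconj (s : V2) : V2 := mkV2 (Cconj (v1 s)) (Cconj (v2 s)).
Definition outer (s t : V2) : M2 :=
  mkM2 (Cmul (v1 s) (v1 t)) (Cmul (v1 s) (v2 t))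
       (Cmul (v2 s) (v1 t)) (Cmul (v2 s) (v2 t)).
(** bilinear (not sesquilinear) pairing  s^T t *)
Definition vdot (s t : V2) : Cplx := Cadd (Cmul (v1 s) (v1 t)) (Cmul (v2 s) (v2 t)).

Definition sigma2 : M2 := mkM2 C0 (Copp ci) ci C0.

Definition c_inf_o : V2 := mkV2 C1 (Copp C1).
Definition c_inf_e : V2 := mkV2 C1 C1.

Definition Rderiv_C (f : R -> Cplx) (x : R) (L : Cplx) : Prop :=
  derivable_pt_lim (fun y => fst (f y)) x (fst L) /\
  derivable_pt_lim (fun y => snd (f y)) x (snd L).
Definition Rderiv_M (f : R -> M2) (x : R) (L : M2) : Prop :=
  Rderiv_C (fun y => m11 (f y)) x (m11 L) /\ Rderiv_C (fun y => m12 (f y)) x (m12 L) /\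
  Rderiv_C (fun y => m21 (f y)) x (m21 L) /\ Rderiv_C (fun y => m22 (f y)) x (m22 L).

Definition Cderiv (f : Cplx -> Cplx) (z L : Cplx) : Prop :=
  forall eps : R, 0 < eps -> exists delta : R, 0 < delta /\
    forall h : Cplx, h <> C0 -> Cnorm h < delta ->
      Cnorm (Csub (Cdiv (Csub (f (Cadd z h)) (f z)) h) L) < eps.
Definition Cderiv_M (f : Cplx -> M2) (z : Cplx) (L : M2) : Prop :=
  Cderiv (fun l => m11 (f l)) z (m11 L) /\ Cderiv (fun l => m12 (f l)) z (m12 L) /\
  Cderiv (fun l => m21 (f l)) z (m21 L) /\ Cderiv (fun l => m22 (f l)) z (m22 L).
Definition entire_M (f : Cplx -> M2) : Prop := forall z, exists L, Cderiv_M f z L.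

Definition cont2 (F : R -> R -> Cplx) : Prop :=
  forall x t eps, 0 < eps -> exists delta, 0 < delta /\
    forall x' t', Rabs (x' - x) < delta -> Rabs (t' - t) < delta ->
      Cnorm (Csub (F x' t') (F x t)) < eps.

Definition NLS_classical (psi : R -> R -> Cplx) : Prop :=
  exists psix psixx psit : R -> R -> Cplx,
    (forall x t, Rderiv_C (fun y => psi y t) x (psix x t) /\
                 Rderiv_C (fun y => psix y t) x (psixx x t) /\
                 Rderiv_C (fun s => psi x s) t (psit x t)) /\
    cont2 psi /\ cont2 psix /\ cont2 psixx /\ cont2 psit /\
    (forall x t,
       Cadd (Cadd (Cmul ci (psit x t)) (Cmul (RtoC (1/2)) (psixx x t)))
            (Cmul (RtoC (Cabs2 (psi x t) - 1)) (psi x t)) = C0).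

Definition LaxX (l p : Cplx) : M2 :=
  mkM2 (Copp (Cmul ci l)) p (Copp (Cconj p)) (Cmul ci l).
Definition LaxT (l p px : Cplx) : M2 :=
  let d := Cadd (Copp (Cmul ci (Cmul l l)))
                (Cmul (Cmul ci (RtoC (1/2))) (RtoC (Cabs2 p - 1))) in
  mkM2 d
       (Cadd (Cmul l p) (Cmul (Cmul ci (RtoC (1/2))) px))
       (Cadd (Copp (Cmul l (Cconj p))) (Cmul (Cmul ci (RtoC (1/2))) (Cconj px)))
       (Copp d).

Definition FundSol (psi psix : R -> R -> Cplx) (U : Cplx -> R -> R -> M2) : Prop :=
  (forall l x t,
     Rderiv_M (fun y => U l y t) x (Mmul (LaxX l (psi x t)) (U l x t)) /\
     Rderiv_M (fun s => U l x s) t (Mmul (LaxT l (psi x t) (psix x t)) (U l x t))) /\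
  (forall l, U l 0 0 = I2) /\
  (forall x t, entire_M (fun l => U l x t)).

(** Given Ui = U(i;x,t) and dUi = d/dl U(i;x,t), the matrix Y_infty *)
Definition Yinf (c : V2) (Ui dUi : M2) : M2 :=
  let s := Mvec Ui c in
  let s' := Mvec dUi c in
  let N := Cadd (Cmul (Cconj (v1 s)) (v1 s)) (Cmul (Cconj (v2 s)) (v2 s)) in
  let w := vdot s (Mvec sigma2 s') in
  let num := Madd (Mscale (Cmul (RtoC (-4)) (Cconj w)) (Mmul (outer s s) sigma2))
                  (Mscale (Cmul (Cmul (RtoC 2) ci) N)
                          (Mmul (Mmul sigma2 (outer (Vconj s) s)) sigma2)) in
  Mscale (Cinv (Cadd (Cmul (RtoC 4) (RtoC (Cabs2 w))) (Cmul N N))) num.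
Definition Zinf (Y : M2) : M2 := Mmul (Mmul sigma2 (Mconj Y)) sigma2.
Definition Gmat (Y : M2) (l : Cplx) : M2 :=
  Madd (Madd I2 (Mscale (Cinv (Csub l ci)) Y)) (Mscale (Cinv (Cadd l ci)) (Zinf Y)).

Definition DarbouxChain (c : V2) (psi psix : nat -> R -> R -> Cplx)
    (U : nat -> Cplx -> R -> R -> M2) (dU : nat -> R -> R -> M2) : Prop :=
  (forall x t, psi O x t = C1) /\
  forall n : nat,
    NLS_classical (psi n) /\
    (forall x t, Rderiv_C (fun y => psi n y t) x (psix n x t)) /\
    FundSol (psi n) (psix n) (U n) /\
    (forall x t, Cderiv_M (fun l => U n l x t) ci (dU n x t)) /\
    (forall x t,
       let Y := Yinf c (U n ci x t) (dU n x t) in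
       psi (S n) x t = Cadd (psi n x t)
                            (Cmul (Cmul (RtoC 2) ci) (Csub (m12 Y) (Cconj (m21 Y))))).

Definition Gn (c : V2) (U : nat -> Cplx -> R -> R -> M2) (dU : nat -> R -> R -> M2)
    (n : nat) (l : Cplx) (x t : R) : M2 :=
  Gmat (Yinf c (U n ci x t) (dU n x t)) l.

(* At the origin every U^[n](λ;0,0) is the identity, for all λ, so its
   λ-derivative at λ = i vanishes.  Hence s = c and s' = 0 there, and
   Y^[n](0,0), and with it G^[n](λ;0,0), depends on the choice of c alone;
   in particular the theorem holds for any c, not only c_o and c_e. *)

From Stdlib Require Import Reals Lra.
Open Scope R_scope.

Definition M2zero : M2 := mkM2 C0 C0 C0 C0.

Lemma Cnorm_real_pos (r : R) : 0 < r -> Cnorm (r, 0) = r.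
Proof.
  intros Hr; unfold Cnorm, Cabs2; simpl.
  replace (r * r + 0 * 0) with (r * r) by ring.
  now apply sqrt_square; lra.
Qed.

(* With a nonzero derivative L, the difference quotient of a constant is
   0, at distance |L| from L: take eps = |L|. *)
Lemma Cderiv_const (f : Cplx -> Cplx) (k z L : Cplx) :
  (forall w, f w = k) -> Cderiv f z L -> L = C0.
Proof.
  intros Hf HD; destruct L as [a b].
  destruct (Req_dec (a * a + b * b) 0) as [H0 | H0].
  { unfold C0; f_equal; nra. }
  exfalso.
  assert (Hpos : 0 < a * a + b * b) by nra.
  destruct (HD _ (sqrt_lt_R0 _ Hpos)) as [d [Hd Hquot]].
  assert (Hh0 : (d / 2, 0) <> C0) by (unfold C0; intros Heq; injection Heq; lra).
  assert (Hhd : Cnorm (d / 2, 0) < d) by (rewrite Cnorm_real_pos; lra).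
  specialize (Hquot _ Hh0 Hhd).
  rewrite !Hf in Hquot.
  replace (Cnorm _) with (sqrt (a * a + b * b)) in Hquot; [lra |].
  unfold Cnorm, Cabs2, Csub, Cdiv, Cadd, Copp, Cmul, Cinv; simpl.
  f_equal; ring.
Qed.

Lemma Cderiv_M_const (f : Cplx -> M2) (A : M2) (z : Cplx) (L : M2) :
  (forall w, f w = A) -> Cderiv_M f z L -> L = M2zero.
Proof.
  intros Hf [D11 [D12 [D21 D22]]].
  destruct L as [a b e g]; unfold M2zero; simpl in *.
  f_equal; eapply Cderiv_const; try eassumption; intros w; cbv beta; now rewrite Hf.
Qed.

Section DarbouxChainAtOrigin.

Variables (c : V2) (psi psix : nat -> R -> R -> Cplx)
          (U : nat -> Cplx -> R -> R -> M2) (dU : nat -> R -> R -> M2).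
Hypothesis Hchain : DarbouxChain c psi psix U dU.

Lemma DarbouxChain_U_origin (n : nat) (l : Cplx) : U n l 0 0 = I2.
Proof.
  destruct Hchain as [_ Hstep].
  destruct (Hstep n) as [_ [_ [[_ [HU0 _]] _]]].
  exact (HU0 l).
Qed.

Lemma DarbouxChain_dU_origin (n : nat) : dU n 0 0 = M2zero.
Proof.
  destruct Hchain as [_ Hstep].
  destruct (Hstep n) as [_ [_ [_ [HdU _]]]].
  exact (Cderiv_M_const _ I2 ci _ (DarbouxChain_U_origin n) (HdU 0 0)).
Qed.

Lemma Gn_origin (n : nat) (l : Cplx) :
  Gn c U dU n l 0 0 = Gmat (Yinf c I2 M2zero) l.
Proof.
  unfold Gn.
  now rewrite DarbouxChain_U_origin, DarbouxChain_dU_origin.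
Qed.

End DarbouxChainAtOrigin.

Theorem mainTheorem10 :
  forall (c : V2) (psi psix : nat -> R -> R -> Cplx)
         (U : nat -> Cplx -> R -> R -> M2) (dU : nat -> R -> R -> M2),
    (c = c_inf_o \/ c = c_inf_e) ->
    DarbouxChain c psi psix U dU ->
    forall (n : nat) (l : Cplx), l <> ci -> l <> Copp ci ->
      Gn c U dU n l 0 0 = Gn c U dU O l 0 0.
Proof.
  intros c psi psix U dU _ Hchain n l _ _.
  now rewrite !(Gn_origin _ _ _ _ _ Hchain).
Qed.
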